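(* Under the setting described in the context, there is a constant $c>0$, depending only on $\psi$, $\mu$ and $d$, such that for all $0<h\le 1$, $$\left\|\left(\int_{\Omega}\psi_h(\cdot-t)\,d\mu(t)\right)^{-1}\right\|_{L^\infty(\Omega)}\le c,$$ equivalently $\int_\Omega \psi_h(x-t)\,d\mu(t)\ge 1/c$ for all $x\in\Omega$.
   Context: Let $d\ge 1$ and let $\Omega\subset\mathbb{R}^d$ be a compact convex domain with Lipschitz boundary. Let $\mu$ be a probability measure on $\Omega$ such that: (1) there is a constant $C_1>0$, depending only on $\mu$ and $d$, with $\mu(\Omega\cap B(x,\alpha))\ge C_1\, m(B(x,\alpha))$ for all $x\in\Omega$ and $0<\alpha\le 1$, where $B(x,\alpha)$ is the Euclidean ball of radius $\alpha$ centered at $x$ and $m$ is Lebesgue measure; (2) $\mu$ extends to a finite positive measure $\mu^*$ on $\mathbb{R}^d$ whose Fourier transform belongs to $L^1(\mathbb{R}^d)$. Let $\psi\in C(\mathbb{R}^d)$ be nonnegative with $\int_{\mathbb{R}^d}\psi=1$, $\int_{\mathbb{R}^d}|x|\psi(x)\,dx<\infty$, and $\psi(x)\ge C_\psi>0$ for all $|x|\le 1$. For $h>0$ set $\psi_h(x)=h^{-d}\psi(x/h)$. *)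

From HB Require Import structures.
From mathcomp Require Import all_boot all_order all_algebra.
From mathcomp Require Import all_classical all_reals all_analysis.
Set Implicit Arguments. Unset Strict Implicit. Unset Printing Implicit Defensive.
Import Order.TTheory GRing.Theory Num.Theory.
Import numFieldNormedType.Exports.
Local Open Scope classical_set_scope.
Local Open Scope ring_scope.

Section Defs.
Variables (R : realType) (d : nat).

Definition Rd := g_sigma_algebraType (@open 'rV[R]_d).

Definition dotv (x y : 'rV[R]_d) : R := \sum_i x 0 i * y 0 i.
Definition enorm (x : 'rV[R]_d) : R := Num.sqrt (dotv x x).
Definition eball (x : 'rV[R]_d) (a : R) : set 'rV[R]_d :=
  [set y | enorm (y - x) < a].

Definition box (a b : 'rV[R]_d) : set 'rV[R]_d :=
  [set y | forall i, a 0 i <= y 0 i <= b 0 i].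

(* leb is the d-dimensional Lebesgue measure on the Borel sets of R^d:
   it gives every box its volume (this determines it uniquely). *)
Definition is_lebesgue (leb : {measure set Rd -> \bar R}) : Prop :=
  forall a b : 'rV[R]_d, (forall i, a 0 i <= b 0 i) ->
    leb (box a b) = (\prod_i (b 0 i - a 0 i))%:E.

Definition proj (e v : 'rV[R]_d) : 'rV[R]_d := v - dotv v e *: e.

Definition lipschitz_boundary (A : set 'rV[R]_d) : Prop :=
  forall x, closure A x -> ~ interior A x ->
  exists (e : 'rV[R]_d) (r L : R) (g : 'rV[R]_d -> R),
    [/\ enorm e = 1, 0 < r,
        (forall u v, `|g u - g v| <= L * enorm (u - v)) &
        forall y, enorm (y - x) < r ->
          (A y <-> g (proj e (y - x)) <= dotv (y - x) e)].

(* modulus of the Fourier transform of a finite measure: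
   |hat nu (xi)| = | int e^{-i xi.x} dnu(x) | *)
Definition fourier_abs (nu : {measure set Rd -> \bar R}) (xi : 'rV[R]_d) : R :=
  Num.sqrt (Rintegral nu setT (fun x : Rd => cos (dotv xi x)) ^+ 2
          + Rintegral nu setT (fun x : Rd => sin (dotv xi x)) ^+ 2).

End Defs.

(* For x in Omega and 0 < h <= 1, psi_h(x - t) >= h^-d Cpsi on the ball B(x, h), so
   the integral is at least h^-d Cpsi mu(Omega ∩ B(x, h)) >= h^-d Cpsi C1 m(B(x, h)).
   The ball contains the cube of side h/d centred at x, of volume (h/d)^d, and the
   powers of h cancel: the bound Cpsi C1 d^-d is uniform in h and x.
   Only condition (1) and the lower bound on psi near the origin are needed. *)

From HB Require Import structures.
From mathcomp Require Import all_boot all_order all_algebra.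
From mathcomp Require Import all_classical all_reals all_analysis.
From mathcomp Require Import ring lra.
Import Order.TTheory GRing.Theory Num.Theory.
Import numFieldNormedType.Exports.
Local Open Scope classical_set_scope.
Local Open Scope ring_scope.

Section euclidean_geometry.
Variables (R : realType) (d : nat).
Implicit Types (x y : 'rV[R]_d) (r s : R).

Lemma continuous_enorm : continuous (@enorm R d).
Proof.
have sum_sq : continuous (fun x : 'rV[R]_d => \sum_i x 0 i * x 0 i).
  apply: (continuous_big (@add_continuous R)) => i _ x.
  by apply: continuousM; exact: coord_continuous.
by move=> x; apply: continuous_comp; [exact: sum_sq | exact: sqrt_continuous].
Qed.

Lemma open_eball x r : open (eball x r).
Proof.
apply: (@open_comp _ _ (fun y => enorm (y - x)) [set z | z < r]); last exact: open_lt.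
move=> y _; apply: continuous_comp; last exact: continuous_enorm.
by apply: continuousB; [exact: cvg_id | exact: cst_continuous].
Qed.

Lemma closed_box (a b : 'rV[R]_d) : closed (box a b).
Proof.
have -> : box a b = \bigcap_i ((fun y : 'rV[R]_d => y 0 i) @^-1` `[a 0 i, b 0 i]).
  apply/seteqP; split=> y /= yab i; first by move=> _; rewrite /= in_itv; exact: yab.
  by have := yab i I; rewrite /= in_itv.
apply: closed_bigI => i _; apply: preimage_closed; last exact: interval_closed.
by move=> y _; exact: coord_continuous.
Qed.

Lemma enormZ (c : R) x : enorm (c *: x) = `|c| * enorm x.
Proof.
rewrite /enorm /dotv -sqrtr_sqr -sqrtrM ?sqr_ge0 //; congr Num.sqrt.
by rewrite mulr_sumr; apply: eq_bigr => i _; rewrite !mxE; ring.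
Qed.

Lemma enormB x y : enorm (x - y) = enorm (y - x).
Proof. by rewrite -opprB -scaleN1r enormZ normrN normr1 mul1r. Qed.

Definition cube x s : set 'rV[R]_d :=
  box (\row_i (x 0 i - s)) (\row_i (x 0 i + s)).

Lemma cube_sub_eball x s r :
  0 <= r -> d%:R * s ^+ 2 < r ^+ 2 -> cube x s `<=` eball x r.
Proof.
move=> r0 dsr y cube_y; rewrite /eball /= /enorm -(ger0_norm r0) -sqrtr_sqr.
have r2_gt0 : 0 < r ^+ 2 by apply: le_lt_trans dsr; rewrite mulr_ge0 ?sqr_ge0.
rewrite ltr_sqrt //; apply: le_lt_trans dsr.
rewrite mulr_natl -[X in _ *+ X]card_ord -sumr_const; apply: ler_sum => i _.
by have /andP[] := cube_y i; rewrite !mxE => lo hi; nra.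
Qed.

Lemma measurable_open (A : set (Rd R d)) : @open 'rV[R]_d A -> measurable A.
Proof. exact: sub_sigma_algebra. Qed.

Lemma measurable_closed (A : set (Rd R d)) : @closed 'rV[R]_d A -> measurable A.
Proof.
move=> cA; rewrite -(setCK A); apply: measurableC.
by apply: measurable_open; exact: closed_openC.
Qed.

Lemma lebesgue_cube (leb : {measure set Rd R d -> \bar R}) x s :
  is_lebesgue leb -> 0 <= s -> leb (cube x s) = ((s *+ 2) ^+ d)%:E.
Proof.
move=> leb_box s_ge0; rewrite leb_box; last by move=> i; rewrite !mxE; lra.
rewrite -[X in _ ^+ X]card_ord -prodr_const.
by congr EFin; apply: eq_bigr => i _; rewrite !mxE; ring.
Qed.

Lemma lebesgue_eball_ge (leb : {measure set Rd R d -> \bar R}) x r :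
  is_lebesgue leb -> (0 < d)%N -> 0 < r ->
  (((r / d%:R) ^+ d)%:E <= leb (eball x r))%E.
Proof.
move=> leb_box d_gt0 r_gt0; have dR_ge1 : 1 <= d%:R :> R by rewrite ler1n.
pose s := r / (2 * d%:R).
have dR_neq0 : d%:R != 0 :> R by rewrite pnatr_eq0 -lt0n.
have s_gt0 : 0 < s by rewrite divr_gt0 // mulr_gt0 // ltr0n.
have r_eq : r = 2 * d%:R * s by rewrite /s; field.
have -> : (r / d%:R) ^+ d = (s *+ 2) ^+ d by congr (_ ^+ _); rewrite r_eq; field.
rewrite -(lebesgue_cube leb x s leb_box (ltW s_gt0)).
apply: le_measure; rewrite ?inE.
- by apply: measurable_closed; exact: closed_box.
- by apply: measurable_open; exact: open_eball.
apply: cube_sub_eball; first exact: ltW.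
rewrite r_eq; nra.
Qed.

End euclidean_geometry.

Section integral_lower_bound.
Context {dT : measure_display} {T : measurableType dT} {R : realType}.
Variable mu : {measure set T -> \bar R}.
Local Open Scope ereal_scope.

(* The integral of a nonnegative function is a supremum over the simple functions
   below it, so monotonicity needs no measurability. *)
Lemma ge0_le_integral_nonmeasurable (D : set T) (f g : T -> \bar R) :
  (forall t, D t -> 0 <= f t) -> (forall t, D t -> f t <= g t) ->
  \int[mu]_(t in D) f t <= \int[mu]_(t in D) g t.
Proof.
move=> f_ge0 fg; rewrite !ge0_integralE // => [|t Dt]; last first.
  exact: le_trans (f_ge0 t Dt) (fg t Dt).
apply: ereal_sup_le => _ [h hf <-]; exists h => //= t.
apply: le_trans (hf t) _; rewrite /patch; case: ifP => // /[!inE] Dt.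
exact: fg.
Qed.

Lemma mul_measure_le_integral (D B : set T) (k : R) (f : T -> R) :
  measurable D -> measurable B -> (0 <= k)%R ->
  (forall t, D t -> 0 <= f t)%R -> (forall t, D t -> B t -> k <= f t)%R ->
  k%:E * mu (D `&` B) <= \int[mu]_(t in D) (f t)%:E.
Proof.
move=> mD mB k_ge0 f_ge0 f_ge_k.
rewrite setIC -integral_indic // -(integralZl_indic mD (fun=> B)) //; last first.
  by move=> k_lt0; have := le_lt_trans k_ge0 k_lt0; rewrite ltxx.
apply: ge0_le_integral_nonmeasurable => t Dt; rewrite lee_fin indicE.
  by rewrite mulr_ge0.
by case: (boolP (t \in B)) => [/[!inE] Bt|_]; rewrite ?mulr1 ?mulr0 ?f_ge_k ?f_ge0.
Qed.

End integral_lower_bound.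

Lemma dilation_ge_on_eball (R : realType) (d : nat) (psi : 'rV[R]_d -> R) (C h : R)
    (x t : 'rV[R]_d) :
  (forall y, enorm y <= 1 -> C <= psi y) -> 0 < h -> eball x h t ->
  C <= psi (h^-1 *: (x - t)).
Proof.
move=> psi_ge h_gt0 xt_lt_h; apply: psi_ge.
rewrite enormZ enormB ger0_norm ?invr_ge0 ?(ltW h_gt0) //.
by rewrite mulrC ler_pdivrMr // mul1r ltW.
Qed.

Theorem lemma2p2 (R : realType) (d : nat) (Omega : set 'rV[R]_d)
  (leb : {measure set (Rd R d) -> \bar R})
  (mu : probability (Rd R d) R)
  (mustar : {finite_measure set (Rd R d) -> \bar R})
  (psi : 'rV[R]_d -> R) :
  (1 <= d)%N ->
  is_lebesgue leb ->
  compact Omega -> convex_set Omega -> lipschitz_boundary Omega ->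
  (* mu is a probability measure on Omega *)
  mu (~` Omega) = 0%E ->
  (* condition (1) *)
  (exists C1 : R, 0 < C1 /\
     forall (x : 'rV[R]_d) (a : R), Omega x -> 0 < a <= 1 ->
       (C1%:E * leb (eball x a) <= mu (Omega `&` eball x a))%E) ->
  (* condition (2) *)
  (forall A : set (Rd R d), measurable A -> A `<=` Omega -> mustar A = mu A) ->
  leb.-integrable setT (fun xi : Rd R d => (fourier_abs mustar xi)%:E) ->
  (* hypotheses on psi *)
  continuous psi ->
  (forall x, 0 <= psi x) ->
  (\int[leb]_(x in setT) (psi x)%:E = 1)%E ->
  (\int[leb]_(x in setT) (enorm x * psi x)%:E < +oo)%E ->
  (exists Cpsi : R, 0 < Cpsi /\ forall x, enorm x <= 1 -> Cpsi <= psi x) ->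
  exists c : R, 0 < c /\
    forall h : R, 0 < h <= 1 -> forall x : 'rV[R]_d, Omega x ->
      ((1 / c)%:E <=
        \int[mu]_(t in Omega) (h ^- d * psi (h^-1 *: (x - t)))%:E)%E.
Proof.
move=> d_gt0 leb_box Omega_compact _ _ _ [C1 [C1_gt0 mu_ball_ge]] _ _ _ psi_ge0 _ _
  [Cpsi [Cpsi_gt0 psi_ge]].
exists (Cpsi * C1 * (d%:R^-1) ^+ d)^-1; split.
  by rewrite invr_gt0 !mulr_gt0 // exprn_gt0 // invr_gt0 ltr0n.
move=> h /andP[h_gt0 h_le1] x Omega_x; rewrite div1r invrK.
have hd_gt0 : 0 < h ^- d by rewrite invr_gt0 exprn_gt0.
have mOmega : measurable (Omega : set (Rd R d)).
  by apply: measurable_closed; apply: compact_closed => //; exact: norm_hausdorff.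
have mball : measurable (eball x h : set (Rd R d)).
  by apply: measurable_open; exact: open_eball.
pose k := h ^- d * Cpsi.
have k_ge0 : 0 <= k by rewrite mulr_ge0 ?ltW.
have mu_ball_le_integral : (k%:E * mu (Omega `&` eball x h) <=
    \int[mu]_(t in Omega) (h ^- d * psi (h^-1 *: (x - t)))%:E)%E.
  apply: mul_measure_le_integral => //.
  - by move=> t _; rewrite mulr_ge0 ?psi_ge0 ?ltW.
  - move=> t _ ball_t; apply: ler_wpM2l; first exact: ltW.
    exact: dilation_ge_on_eball ball_t.
have mu_ball_ge_volume : ((C1 * (h / d%:R) ^+ d)%:E <= mu (Omega `&` eball x h))%E.
  apply: le_trans (mu_ball_ge x h Omega_x _); last by rewrite h_gt0 h_le1.
  rewrite EFinM; apply: lee_wpmul2l; first by rewrite lee_fin ltW.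
  exact: lebesgue_eball_ge.
apply: le_trans mu_ball_le_integral.
apply: le_trans (lee_wpmul2l _ mu_ball_ge_volume); last by rewrite lee_fin.
have powers_of_h_cancel : Cpsi * C1 * d%:R^-1 ^+ d = k * (C1 * (h / d%:R) ^+ d).
  rewrite /k expr_div_n exprVn; field.
  by rewrite !expf_neq0 ?pnatr_eq0 -?lt0n ?gt_eqF.
by rewrite powers_of_h_cancel EFinM.
Qed.
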